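(* Let $p,q,d,n$ be positive integers with $p>2q$ and $d\ge 3$, let $s$ be a special vertex of $U^n_{p,q,d}$ and let $\ell$ be an integer with $1\le \ell\le \bigl\lceil \tfrac{q}{p-2q}\bigr\rceil-1$. Then the set of vertices of $U^n_{p,q,d}$ at distance exactly $\ell$ from $s$ is an independent set.
   Context: For integers $1\le q\le p$, the Kneser graph $K_{p/q}$ has as vertices all $q$-element subsets of $[p]=\{1,\dots,p\}$, two being adjacent iff they are disjoint. The extension product of graphs $G$ and $H$ has vertex set $V(G)\times V(H)$, with $(u,v)$ adjacent to $(u',v')$ iff $uu'\in E(G)$ and either $v=v'$ or $vv'\in E(H)$. Let $N=n\binom{p}{q}$. If $d$ is even, let $S$ be the star $K_{1,N}$ with each edge subdivided $d/2-1$ times, and let $U^n_{p,q,d}$ be the extension product of $K_{p/q}$ and $S$. If $d$ is odd, let $L$ be the graph obtained from the clique $K_N$ by identifying each clique vertex with one endpoint of its own path on $(d+1)/2$ vertices (the other endpoints being the leaves of $L$), and let $U^n_{p,q,d}$ be the extension product of $K_{p/q}$ and $L$. In both cases the $N$ leaves $\lambda$ of $S$ (resp. $L$) are partitioned into $\binom pq$ groups of $n$ leaves indexed by the $q$-subsets $X$ of $[p]$, and for each leaf $\lambda$ in the group of $X$ the vertex $(X,\lambda)$ is called special. *)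

From mathcomp Require Import all_boot.
Unset Printing Implicit Defensive.

(* Vertices of the Kneser graph K_{p/q}: q-element subsets of [p] = 'I_p. *)
Definition Kv (p q : nat) : finType := {X : {set 'I_p} | #|X| == q}.

Definition kneser_rel (p q : nat) : rel (Kv p q) :=
  fun X Y => [disjoint val X & val Y].

Definition ext_rel {G H : finType} (eG : rel G) (eH : rel H) : rel (G * H) :=
  fun a b => eG a.1 b.1 && ((a.2 == b.2) || eH a.2 b.2).

(* Subdivided star: center None; branch i has vertices Some (i,j), j < m,
   with Some (i,0) adjacent to the center, Some (i,j) ~ Some (i,j+1);
   the leaf of branch i is Some (i, m-1).  Each edge of K_{1,N} is
   subdivided m-1 times (m = d/2). *)
Definition star_rel (I : finType) (m : nat) : rel (option (I * 'I_m)) :=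
  fun a b =>
    match a, b with
    | None, None => false
    | None, Some (_, j) => val j == 0
    | Some (_, j), None => val j == 0
    | Some (i, j), Some (k, l) =>
        (i == k) && ((val l == (val j).+1) || (val j == (val l).+1))
    end.

(* The graph L: clique on the vertices (i,0), and for each i a path
   (i,0),(i,1),...,(i,m-1) on m = (d+1)/2 vertices; leaf of i is (i, m-1). *)
Definition L_rel (I : finType) (m : nat) : rel (I * 'I_m) :=
  fun a b =>
    ((val a.2 == 0) && (val b.2 == 0) && (a.1 != b.1))
    || ((a.1 == b.1) && ((val b.2 == (val a.2).+1) || (val a.2 == (val b.2).+1))).

Definition NN (p q n : nat) : nat := n * 'C(p, q).

Definition U_even (p q d n : nat) :=
  ext_rel (kneser_rel p q) (star_rel 'I_(NN p q n) d./2).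
Definition U_odd (p q d n : nat) :=
  ext_rel (kneser_rel p q) (L_rel 'I_(NN p q n) (d.+1)./2).

Definition walk_len {T : finType} (e : rel T) (s x : T) (l : nat) : Prop :=
  exists w : seq T, [/\ path e s w, last s w = x & size w = l].

Definition dist_eq {T : finType} (e : rel T) (s x : T) (l : nat) : Prop :=
  walk_len e s x l /\ forall k, k < l -> ~ walk_len e s x k.

Definition sphere_independent {T : finType} (e : rel T) (s : T) (l : nat) : Prop :=
  forall x y, dist_eq e s x l -> dist_eq e s y l -> ~~ e x y.

Definition ceil_div (a b : nat) : nat := (a + b - 1) %/ b.

From mathcomp Require Import all_boot.
From mathcomp Require Import zify.

(* Every edge of U^n_{p,q,d} projects onto an edge of the
   Kneser graph K_{p/q} (the extension product only uses edges of the first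
   factor), so a walk of length k from s = (X0, _) projects onto a Kneser
   walk of length k from X0.  Writing c = p - 2q, along any Kneser walk
   the end vertex U after k steps satisfies
     |X0 :&: U| <= (k/2) c   if k is odd,   |X0 :\: U| <= (k/2) c  if k is even,
   because two disjoint q-sets miss only c points of [p].  Two vertices
   satisfying this bound for the same k with k c < q cannot be disjoint,
   hence two vertices reachable from s by walks of length l are never
   adjacent.  The hypothesis l <= ceil(q/c) - 1 gives exactly l c < q.
   The argument works for any start vertex and any second factor of the
   extension product. *)

Section KneserWalks.

Context {p q : nat}.

Local Notation K := (Kv p q).
Local Notation adj := (kneser_rel p q).

Lemma card_Kv (U : K) : #|val U| = q.
Proof. exact: eqP (valP U). Qed.

Lemma kneser_disjoint {U V : K} {x : 'I_p} :
  adj U V -> x \in val U -> x \in val V -> False.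
Proof.
move=> hUV hU hV; have := congr1 (fun A : {set 'I_p} => x \in A) (disjoint_setI0 hUV).
by rewrite /= inE hU hV in_set0.
Qed.

Lemma card_kneser_union (U V : K) : adj U V -> #|val U :|: val V| = 2 * q.
Proof. by move=> hUV; rewrite cardsU (disjoint_setI0 hUV) cards0 !card_Kv; lia. Qed.

Definition walk_bound (X0 : K) (k : nat) (U : K) : bool :=
  if odd k then #|val X0 :&: val U| <= k./2 * (p - 2 * q)
  else #|val X0 :\: val U| <= k./2 * (p - 2 * q).

(* From an even step to an odd one: X0 :&: V lies in X0 :\: U. *)
Lemma walk_bound_step_even (X0 U V : K) k : ~~ odd k ->
  walk_bound X0 k U -> adj U V -> walk_bound X0 k.+1 V.
Proof.
rewrite /walk_bound /= => /negbTE hk; rewrite hk /= => hP hUV.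
have hsub : val X0 :&: val V \subset val X0 :\: val U.
  apply/subsetP => x; rewrite !inE => /andP [-> hV]; rewrite andbT.
  by apply/negP => hU; apply: (kneser_disjoint hUV hU hV).
rewrite uphalf_half hk add0n; exact: leq_trans (subset_leq_card hsub) hP.
Qed.

(* From an odd step to an even one: X0 :\: V lies in X0 :&: U together with
   the p - 2q points outside U :|: V. *)
Lemma walk_bound_step_odd (X0 U V : K) k : odd k ->
  walk_bound X0 k U -> adj U V -> walk_bound X0 k.+1 V.
Proof.
rewrite /walk_bound /= => hk; rewrite hk /= => hP hUV.
have hsub : val X0 :\: val V \subset (val X0 :&: val U) :|: ~: (val U :|: val V).
  apply/subsetP => x; rewrite !inE.
  by case: (x \in val X0); case: (x \in val U); case: (x \in val V).
have hunion := cardsU (val X0 :&: val U) (~: (val U :|: val V)).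
have hcompl := cardsC (val U :|: val V).
rewrite card_kneser_union // card_ord in hcompl.
have hhalf : (k.+1)./2 = (k./2).+1 by move: hk; lia.
move: (subset_leq_card hsub) hunion hcompl hhalf; rewrite /=; lia.
Qed.

Lemma walk_bound_step {X0 U V : K} {k : nat} :
  walk_bound X0 k U -> adj U V -> walk_bound X0 k.+1 V.
Proof.
by case hk: (odd k); [apply: walk_bound_step_odd | apply: walk_bound_step_even; rewrite hk].
Qed.

Lemma walk_bound_path {X0 U : K} {w : seq K} {k : nat} :
  path adj U w -> walk_bound X0 k U -> walk_bound X0 (k + size w) (last U w).
Proof.
elim: w U k => [|V w IH] U k /=; first by rewrite addn0.
move=> /andP [hUV hw] hP; rewrite addnS -addSn; apply: IH => //.
exact: walk_bound_step hP hUV.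
Qed.

(* As long as l (p - 2q) < q, two vertices satisfying the bound for l are
   never disjoint: for even l they would split X0 into two small pieces, for
   odd l their union would lie in two small pieces and the complement of X0. *)
Lemma walk_bound_not_adjacent {l : nat} {X0 Y Z : K} : l * (p - 2 * q) < q ->
  walk_bound X0 l Y -> walk_bound X0 l Z -> ~~ adj Y Z.
Proof.
rewrite /walk_bound => hl; case hk: (odd l) => hY hZ; apply/negP => hYZ.
- have hsub : val Y :|: val Z \subset
      (val X0 :&: val Y) :|: (val X0 :&: val Z) :|: ~: val X0.
    apply/subsetP => x; rewrite !inE.
    by case: (x \in val X0); case: (x \in val Y); case: (x \in val Z).
  have hcover := subset_leq_card hsub; rewrite card_kneser_union // in hcover.
  have h1 := cardsU ((val X0 :&: val Y) :|: (val X0 :&: val Z)) (~: val X0).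
  have h2 := cardsU (val X0 :&: val Y) (val X0 :&: val Z).
  have h3 := cardsC (val X0); rewrite card_ord card_Kv in h3.
  have hl' : l = (l./2).*2.+1 by move: hk; lia.
  rewrite hl' in hl; nia.
- have hsub : val X0 \subset (val X0 :\: val Y) :|: (val X0 :\: val Z).
    apply/subsetP => x; rewrite !inE => hx; rewrite hx /= !andbT.
    case hy: (x \in val Y) => //=; apply/negP => hz; apply: (kneser_disjoint hYZ hy hz).
  have hcover := subset_leq_card hsub; rewrite card_Kv in hcover.
  have h1 := cardsU (val X0 :\: val Y) (val X0 :\: val Z).
  have hl' : l = (l./2).*2 by move: hk; lia.
  rewrite hl' in hl; nia.
Qed.

End KneserWalks.

Lemma ext_path_fst {G H : finType} {eG : rel G} {eH : rel H} {a : G * H} {w} :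
  path (ext_rel eG eH) a w -> path eG a.1 (map fst w).
Proof.
elim: w a => [|b w IH] a //= /andP [/andP [hab _] hw]; rewrite hab /=; exact: IH.
Qed.

Lemma ext_kneser_sphere_independent p q (H : finType) (eH : rel H)
    (s : Kv p q * H) l :
  l * (p - 2 * q) < q -> sphere_independent (ext_rel (kneser_rel p q) eH) s l.
Proof.
move=> hl x y [[w [hw hx hsize]] _] [[w' [hw' hy hsize']] _].
apply/negP => /andP [hxy _].
have start : walk_bound s.1 0 s.1 by rewrite /walk_bound /= setDv cards0.
have := walk_bound_path (ext_path_fst hw) start.
have := walk_bound_path (ext_path_fst hw') start.
rewrite /= !size_map hsize hsize' !last_map hx hy => hY hX.
by move: (walk_bound_not_adjacent hl hX hY); rewrite hxy.
Qed.

Lemma lt_of_le_ceil_div_pred a b l :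
  0 < b -> 0 < l -> l <= ceil_div a b - 1 -> l * b < a.
Proof.
move=> hb hl0 hl; have : l.+1 <= (a + b - 1) %/ b by rewrite /ceil_div in hl; lia.
by rewrite leq_divRL // mulSn; lia.
Qed.

Theorem mainTheorem4 (p q d n : nat)
  (hp : 0 < p) (hq : 0 < q) (hd : 0 < d) (hn : 0 < n)
  (hpq : 2 * q < p) (hd3 : 3 <= d)
  (grp : 'I_(NN p q n) -> Kv p q)
  (hgrp : forall X : Kv p q, #|[set i | grp i == X]| = n)
  (l : nat) (hl1 : 1 <= l) (hl2 : l <= ceil_div q (p - 2 * q) - 1) :
  (~~ odd d ->
     forall (i : 'I_(NN p q n)) (j : 'I_(d./2)), val j = (d./2).-1 ->
       sphere_independent (U_even p q d n) (grp i, Some (i, j)) l)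
  /\
  (odd d ->
     forall (i : 'I_(NN p q n)) (j : 'I_((d.+1)./2)), val j = ((d.+1)./2).-1 ->
       sphere_independent (U_odd p q d n) (grp i, (i, j)) l).
Proof.
have hl : l * (p - 2 * q) < q by apply: lt_of_le_ceil_div_pred hl1 hl2; lia.
by split=> _ i j _; exact: ext_kneser_sphere_independent.
Qed.
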